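(* There is an absolute constant $C>0$ such that for every nonconstant harmonic function $u:\mathbb{C}\to\mathbb{R}$ there exists a sequence of discs $D(z_n,\rho_n)$ ($z_n\in\mathbb{C}$, $\rho_n>0$) with, for all $n$, $u(z_n)=0$ and $M(u,z_n,\rho_n)\le C\,M(u,z_n,\rho_n/2)$, and moreover $\lim_{n\to\infty}M(u,z_n,\rho_n)=+\infty$.
   Context: For a real function $u$, $M(u,z,r)=\sup_{D(z,r)}u$ denotes the supremum of $u$ over the disc $D(z,r)$ of center $z$ and radius $r$. *)

From Stdlib Require Import Reals.
From Coquelicot Require Import Coquelicot.
Open Scope R_scope.

Definition curry2 (u : C -> R) : R -> R -> R := fun x y => u (x, y).

Definition dx (u : C -> R) : C -> R := fun z => Derive (fun t => u (t, snd z)) (fst z).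
Definition dy (u : C -> R) : C -> R := fun z => Derive (fun t => u (fst z, t)) (snd z).

Definition C2 (u : C -> R) : Prop :=
  (forall z, ex_derive (fun t => u (t, snd z)) (fst z)) /\
  (forall z, ex_derive (fun t => u (fst z, t)) (snd z)) /\
  (forall v, (v = dx u \/ v = dy u) ->
     (forall z, ex_derive (fun t => v (t, snd z)) (fst z)) /\
     (forall z, ex_derive (fun t => v (fst z, t)) (snd z))) /\
  (forall v, (v = u \/ v = dx u \/ v = dy u \/ v = dx (dx u) \/ v = dy (dx u)
              \/ v = dx (dy u) \/ v = dy (dy u)) ->
     forall x y, continuity_2d_pt (curry2 v) x y).

Definition harmonic (u : C -> R) : Prop :=
  C2 u /\ forall z, dx (dx u) z + dy (dy u) z = 0.

Definition disc (z : C) (r : R) (w : C) : Prop := Cmod (w - z) < r.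

Definition M (u : C -> R) (z : C) (r : R) : Rbar :=
  Lub_Rbar (fun a => exists w, disc z r w /\ a = u w).

(* In polar coordinates around q, the moments a(r) = int_0^2pi u(q + r e^it) w(t) dt of a
   harmonic u against w = 1, cos, sin satisfy Euler's equation r (r a')' = a (or (r a')' = 0 for
   w = 1); regularity at r = 0 then gives the mean value property and the moments
   pi r dx u(q), pi r dy u(q). Hence |grad u(q)| <= 2 (u(q) - k) / r whenever u >= k on the circle
   of radius r, which yields Liouville's theorem (a nonconstant u is unbounded above and below)
   and a Harnack inequality u(p) <= e^8 u(q) for u > 0 on D(p, d) and |q - p| <= d/2.

   Given A, take c with u(c) <= 0 and q0 with u(q0) > K A, where K = 2^(gam+1), and a point p
   at which G = max(u, 0) (R0 - |. - c|)^gam is more than half its supremum on the closed disc of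
   radius R0 = 2 |q0 - c| + 1 around c. With d = R0 - |p - c|, the inequality G < 2 G(p) bounds u
   by K u(p) on D(p, d/2) and gives u(p) > A, while the Harnack inequality and
   (13/12)^gam > 2 e^8 force u to vanish at some z in D(p, d/6). The disc D(z, d/3) works;
   gam = 192 will do, so C = 2^193. *)

From Pilot Require Import Defs.
From Stdlib Require Import Reals Lra Psatz Classical ClassicalEpsilon FunctionalExtensionality.
From Coquelicot Require Import Coquelicot.
Open Scope R_scope.

(* Coquelicot states derivatives and integrals with the generic [plus], [mult], [scal], ...
   of its algebraic hierarchy; on [R] they are convertible to the field operations. *)
Ltac R_ops :=
  cbv beta; match goal with |- ?x = ?y => change (x = y :> R) end;
  repeat (change (plus ?a ?b) with (a + b) || change (mult ?a ?b) with (a * b)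
          || change (opp ?a) with (- a) || change (minus ?a ?b) with (a - b)
          || change (scal ?a ?b) with (a * b)
          || change (@one _) with 1 || change (@zero _) with 0).

Ltac ring_R := R_ops; ring.

(** * Real analysis in one and two variables *)

Lemma continuous_of_is_derive (f : R -> R) x l : is_derive f x l -> continuous f x.
Proof. intros H. apply (ex_derive_continuous (V := R_NormedModule)). now exists l. Qed.

Lemma continuity_2d_pt_comp (f X Y : R -> R -> R) x y :
  continuity_2d_pt f (X x y) (Y x y) -> continuity_2d_pt X x y -> continuity_2d_pt Y x y ->
  continuity_2d_pt (fun a b => f (X a b) (Y a b)) x y.
Proof.
intros Hf HX HY eps.
destruct (Hf eps) as [d Hd].
destruct (HX d) as [dX HdX]. destruct (HY d) as [dY HdY].
exists (mkposreal _ (Rmin_stable_in_posreal dX dY)). simpl.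
intros u v Hu Hv. apply Hd.
- apply HdX; eapply Rlt_le_trans; eauto using Rmin_l.
- apply HdY; eapply Rlt_le_trans; eauto using Rmin_r.
Qed.

Lemma continuity_2d_pt_of_snd (g : R -> R) r t :
  continuous g t -> continuity_2d_pt (fun _ s => g s) r t.
Proof.
intros H. apply continuity_2d_pt_filterlim.
apply (filterlim_comp _ _ _ snd g _ (locally t)); [|exact H].
intros P [e He]. exists e. intros z [_ Hz]. now apply He.
Qed.

Lemma continuous_of_continuity_2d_pt (F : R -> R -> R) r t :
  continuity_2d_pt F r t -> continuous (F r) t.
Proof.
intros H. apply continuity_2d_pt_filterlim in H.
apply (filterlim_comp _ _ _ (fun s => (r, s)) (fun z => F (fst z) (snd z)) _ (locally (r, t)));
  [| exact H].
intros P [e He]. exists e. intros s Hs. apply He. split; [apply ball_center | exact Hs].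
Qed.

Lemma ex_RInt_of_continuous (f : R -> R) a b : (forall t, continuous f t) -> ex_RInt f a b.
Proof. intros H. apply (ex_RInt_continuous (V := R_CompleteNormedModule)). intros; apply H. Qed.

Lemma RInt_of_is_derive (F f : R -> R) a b :
  (forall t, is_derive F t (f t)) -> (forall t, continuous f t) -> RInt f a b = F b - F a.
Proof. intros HF Hf. apply is_RInt_unique, (is_RInt_derive F f); intros; auto. Qed.

Lemma is_derive_RInt_param_2d (F dF : R -> R -> R) a b r :
  (forall r t, is_derive (fun z => F z t) r (dF r t)) ->
  (forall r t, continuity_2d_pt dF r t) -> (forall r t, continuity_2d_pt F r t) ->
  is_derive (fun r => RInt (F r) a b) r (RInt (dF r) a b).
Proof.
intros HD HdC HC.
assert (E : forall r t, Derive (fun z => F z t) r = dF r t) by (intros; now apply is_derive_unique).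
rewrite <- (RInt_ext (fun t => Derive (fun z => F z t) r)) by (intros; apply E).
apply (is_derive_RInt_param F a b r).
- apply filter_forall. intros x t _. eexists. apply HD.
- intros t _. apply (continuity_2d_pt_ext dF); [intros; now rewrite E | apply HdC].
- apply filter_forall. intros y. apply ex_RInt_of_continuous.
  intros t. now apply continuous_of_continuity_2d_pt.
Qed.

Lemma RInt_by_parts (F f g g' : R -> R) a b :
  (forall t, is_derive F t (f t)) -> (forall t, is_derive g t (g' t)) ->
  (forall t, continuous f t) -> (forall t, continuous g' t) ->
  F b * g b = F a * g a ->
  RInt (fun t => f t * g t) a b = - RInt (fun t => F t * g' t) a b.
Proof.
intros HF Hg Hf Hg' Hab.
assert (CF : forall t, continuous F t) by eauto using continuous_of_is_derive.
assert (Cg : forall t, continuous g t) by eauto using continuous_of_is_derive.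
assert (Cfg : forall t, continuous (fun t => f t * g t) t)
  by (intros; now apply (continuous_mult f g)).
assert (CFg' : forall t, continuous (fun t => F t * g' t) t)
  by (intros; now apply (continuous_mult F g')).
assert (Hsum : RInt (fun t => f t * g t + F t * g' t) a b
               = RInt (fun t => f t * g t) a b + RInt (fun t => F t * g' t) a b)
  by (apply (RInt_plus (V := R_CompleteNormedModule)); now apply ex_RInt_of_continuous).
rewrite (RInt_of_is_derive (fun t => F t * g t)) in Hsum; [lra | |].
- intros t. apply (is_derive_mult F g); auto. intros; apply Rmult_comm.
- intros t. now apply (continuous_plus (fun t => f t * g t)).
Qed.

Lemma const_of_is_derive_0 (h : R -> R) : (forall r, is_derive h r 0) -> forall x y, h x = h y.
Proof.
intros H x y.
destruct (MVT_gen h x y (fun _ => 0)) as [c [_ Hc]]; [intros; apply H | | lra].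
intros z _. apply continuity_pt_filterlim. eapply continuous_of_is_derive, H.
Qed.

Lemma differentiable_pt_lim_of_partials (f : R -> R -> R) x y :
  (forall a b, ex_derive (fun t => f t b) a) -> (forall a b, ex_derive (fun t => f a t) b) ->
  continuity_2d_pt (fun a b => Derive (fun t => f t b) a) x y ->
  differentiable_pt_lim f x y (Derive (fun t => f t y) x) (Derive (fun t => f x t) y).
Proof.
intros Hx Hy Hc [eps Heps]. simpl.
set (lx := Derive (fun t => f t y) x). set (ly := Derive (fun t => f x t) y).
destruct (Hc (mkposreal (eps / 2) ltac:(lra))) as [d1 H1]. simpl in H1.
assert (Dy : derivable_pt_lim (fun t => f x t) y ly)
  by (apply is_derive_Reals, Derive_correct, Hy).
destruct (Dy (eps / 2) ltac:(lra)) as [d2 H2].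
exists (mkposreal _ (Rmin_stable_in_posreal d1 d2)). simpl.
intros u v Hu Hv.
assert (Hu1 : Rabs (u - x) < d1) by (eapply Rlt_le_trans; [apply Hu | apply Rmin_l]).
assert (Hv1 : Rabs (v - y) < d1) by (eapply Rlt_le_trans; [apply Hv | apply Rmin_l]).
assert (Hv2 : Rabs (v - y) < d2) by (eapply Rlt_le_trans; [apply Hv | apply Rmin_r]).
assert (Ex : Rabs (f u v - f x v - lx * (u - x)) <= eps / 2 * Rabs (u - x)).
{ destruct (MVT_gen (fun t => f t v) x u (fun t => Derive (fun s => f s v) t)) as [c [Hc1 ->]].
  - intros t _. apply Derive_correct, Hx.
  - intros t _. apply continuity_pt_filterlim, (ex_derive_continuous (fun s => f s v)), Hx.
  - rewrite <- Rmult_minus_distr_r, Rabs_mult.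
    apply Rmult_le_compat_r; [apply Rabs_pos | apply Rlt_le, H1; [|exact Hv1]].
    apply Rle_lt_trans with (2 := Hu1).
    unfold Rmin, Rmax in Hc1. destruct (Rle_dec x u); apply Rabs_le; split_Rabs; lra. }
assert (Ey : Rabs (f x v - f x y - ly * (v - y)) <= eps / 2 * Rabs (v - y)).
{ destruct (Req_dec v y) as [-> | Hvy].
  - rewrite !Rminus_diag, Rmult_0_r, Rminus_0_r, Rabs_R0. lra.
  - specialize (H2 (v - y) ltac:(lra) Hv2). replace (y + (v - y)) with v in H2 by ring.
    replace (f x v - f x y - ly * (v - y)) with (((f x v - f x y) / (v - y) - ly) * (v - y))
      by (field; lra).
    rewrite Rabs_mult. apply Rmult_le_compat_r; [apply Rabs_pos | lra]. }
assert (Mu := Rmax_l (Rabs (u - x)) (Rabs (v - y))).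
assert (Mv := Rmax_r (Rabs (u - x)) (Rabs (v - y))).
replace (f u v - f x y - (lx * (u - x) + ly * (v - y)))
  with ((f u v - f x v - lx * (u - x)) + (f x v - f x y - ly * (v - y))) by ring.
eapply Rle_trans; [apply Rabs_triang | nra].
Qed.

Definition continuous_2d (f : C -> R) : Prop := forall x y, continuity_2d_pt (curry2 f) x y.

Definition C1 (f : C -> R) : Prop :=
  (forall z, ex_derive (fun t => f (t, snd z)) (fst z)) /\
  (forall z, ex_derive (fun t => f (fst z, t)) (snd z)) /\
  continuous_2d (dx f) /\ continuous_2d (dy f).

Lemma C1_differentiable f x y :
  C1 f -> differentiable_pt_lim (curry2 f) x y (dx f (x, y)) (dy f (x, y)).
Proof.
intros [H1 [H2 [H3 _]]].
apply differentiable_pt_lim_of_partials;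
  [intros a b; exact (H1 (a, b)) | intros a b; exact (H2 (a, b)) | exact (H3 x y)].
Qed.

Lemma C1_continuous f : C1 f -> continuous_2d f.
Proof.
intros Hf x y. apply differentiable_continuity_pt.
exists (dx f (x, y)), (dy f (x, y)). now apply C1_differentiable.
Qed.

Lemma is_derive_comp_C1 f (X Y : R -> R) t dX dY :
  C1 f -> is_derive X t dX -> is_derive Y t dY ->
  is_derive (fun s => f (X s, Y s)) t (dx f (X t, Y t) * dX + dy f (X t, Y t) * dY).
Proof.
intros Hf HX HY. apply is_derive_Reals.
apply (derivable_pt_lim_comp_2d (curry2 f));
  [now apply C1_differentiable | now apply is_derive_Reals ..].
Qed.

Lemma harmonic_C1 u : harmonic u -> C1 u /\ C1 (dx u) /\ C1 (dy u).
Proof.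
intros [[H1 [H2 [H3 H4]]] _].
destruct (H3 (dx u) (or_introl eq_refl)) as [A1 A2].
destruct (H3 (dy u) (or_intror eq_refl)) as [B1 B2].
repeat split; auto; intros x y; apply H4; tauto.
Qed.

Lemma dx_opp f : dx (fun z => - f z) = fun z => - dx f z.
Proof. apply functional_extensionality. intros z. apply Derive_opp. Qed.

Lemma dy_opp f : dy (fun z => - f z) = fun z => - dy f z.
Proof. apply functional_extensionality. intros z. apply Derive_opp. Qed.

Lemma harmonic_opp u : harmonic u -> harmonic (fun z => - u z).
Proof.
intros [[H1 [H2 [H3 H4]]] Hl].
split; [split; [|split; [|split]] | intros z; rewrite ?dx_opp, ?dy_opp; specialize (Hl z); lra].
- intros z. apply (ex_derive_opp (K := R_AbsRing) (V := R_NormedModule)), H1.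
- intros z. apply (ex_derive_opp (K := R_AbsRing) (V := R_NormedModule)), H2.
- intros v Hv. rewrite ?dx_opp, ?dy_opp in Hv.
  destruct Hv as [-> | ->]; split; intros z;
    apply (ex_derive_opp (K := R_AbsRing) (V := R_NormedModule)), H3; tauto.
- intros v Hv x y. rewrite ?dx_opp, ?dy_opp, ?dx_opp in Hv.
  assert (Hw : exists w, v = (fun z => - w z) /\ forall x y, continuity_2d_pt (curry2 w) x y)
    by (repeat destruct Hv as [-> | Hv]; try subst v;
        eexists; split; try reflexivity; apply H4; tauto).
  destruct Hw as [w [-> Hw]]. apply (continuity_2d_pt_opp (curry2 w)), Hw.
Qed.

(** * Harmonic functions in polar coordinates *)

Definition circle_pt (q : C) (r t : R) : C := (fst q + r * cos t, snd q + r * sin t).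

Definition polar (f : C -> R) (q : C) (r t : R) : R := f (circle_pt q r t).

Definition radial (f : C -> R) (q : C) (r t : R) : R :=
  polar (dx f) q r t * cos t + polar (dy f) q r t * sin t.

Definition tangential (f : C -> R) (q : C) (r t : R) : R :=
  - polar (dx f) q r t * sin t + polar (dy f) q r t * cos t.

Lemma is_derive_polar_r f q r t :
  C1 f -> is_derive (fun r => polar f q r t) r (radial f q r t).
Proof.
intros Hf. unfold radial, polar, circle_pt.
apply (is_derive_comp_C1 f (fun r => fst q + r * cos t) (fun r => snd q + r * sin t));
  [exact Hf | auto_derive; auto; ring ..].
Qed.

Lemma is_derive_polar_t f q r t :
  C1 f -> is_derive (polar f q r) t (r * tangential f q r t).
Proof.
intros Hf. unfold tangential, polar, circle_pt.
evar (l : R). replace (r * _) with l; unfold l.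
- apply (is_derive_comp_C1 f (fun t => fst q + r * cos t) (fun t => snd q + r * sin t));
    [exact Hf | auto_derive; auto; reflexivity ..].
- ring.
Qed.

Lemma continuity_2d_polar f q r t : continuous_2d f -> continuity_2d_pt (polar f q) r t.
Proof.
intros Hf. unfold polar, circle_pt.
apply (continuity_2d_pt_comp (curry2 f)
         (fun r t => fst q + r * cos t) (fun r t => snd q + r * sin t));
  [apply Hf | ..]; apply continuity_2d_pt_plus, continuity_2d_pt_mult;
  auto using continuity_2d_pt_const, continuity_2d_pt_id1, continuity_2d_pt_of_snd,
    continuous_cos, continuous_sin.
Qed.

Lemma polar_2PI f q r : polar f q r (2 * PI) = polar f q r 0.
Proof. unfold polar, circle_pt. now rewrite cos_2PI, sin_2PI, cos_0, sin_0. Qed.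

Lemma polar_0 f q t : polar f q 0 t = f q.
Proof. unfold polar, circle_pt. rewrite !Rmult_0_l, !Rplus_0_r. now destruct q. Qed.

(* [continuity_2d_pt_of_snd] is only tried on goals syntactically of the form
   [fun _ s => g s]: blind unification would unfold [polar] and [Derive]. *)
Ltac continuity_2d :=
  repeat first
    [ apply continuity_2d_pt_plus | apply continuity_2d_pt_mult | apply continuity_2d_pt_opp
    | apply continuity_2d_pt_id1 | apply continuity_2d_pt_const
    | apply continuity_2d_polar; assumption
    | match goal with
      | |- continuity_2d_pt (fun _ s => @?g s) _ _ =>
          apply (continuity_2d_pt_of_snd g); solve [auto using continuous_cos, continuous_sin]
      end ].

Definition circle_moment (u : C -> R) (q : C) (w : R -> R) (r : R) : R :=
  RInt (fun t => polar u q r t * w t) 0 (2 * PI).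

Definition periodic_C2 (w w' w'' : R -> R) : Prop :=
  (forall t, is_derive w t (w' t)) /\ (forall t, is_derive w' t (w'' t)) /\
  (forall t, continuous w'' t) /\ w (2 * PI) = w 0 /\ w' (2 * PI) = w' 0.

Section HarmonicPolar.

Variables (u : C -> R) (q : C).
Hypothesis Hu : harmonic u.

Let u_C1 : C1 u := proj1 (harmonic_C1 u Hu).
Let ux_C1 : C1 (dx u) := proj1 (proj2 (harmonic_C1 u Hu)).
Let uy_C1 : C1 (dy u) := proj2 (proj2 (harmonic_C1 u Hu)).
Let u_cont : continuous_2d u := C1_continuous u u_C1.
Let ux_cont : continuous_2d (dx u) := C1_continuous _ ux_C1.
Let uy_cont : continuous_2d (dy u) := C1_continuous _ uy_C1.
Let uxx_cont : continuous_2d (dx (dx u)) := proj1 (proj2 (proj2 ux_C1)).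
Let uxy_cont : continuous_2d (dy (dx u)) := proj2 (proj2 (proj2 ux_C1)).
Let uyx_cont : continuous_2d (dx (dy u)) := proj1 (proj2 (proj2 uy_C1)).
Let uyy_cont : continuous_2d (dy (dy u)) := proj2 (proj2 (proj2 uy_C1)).

Lemma is_derive_radial_r r t :
  is_derive (fun r => radial u q r t) r
    (radial (dx u) q r t * cos t + radial (dy u) q r t * sin t).
Proof.
unfold radial at 1.
apply (is_derive_plus (fun r => polar (dx u) q r t * cos t) (fun r => polar (dy u) q r t * sin t));
  [apply (is_derive_scal_l (fun r => polar (dx u) q r t) r _ (cos t))
  |apply (is_derive_scal_l (fun r => polar (dy u) q r t) r _ (sin t))];
  apply is_derive_polar_r; assumption.
Qed.

Lemma is_derive_tangential_t r t :
  is_derive (tangential u q r) t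
    (r * (tangential (dy u) q r t * cos t - tangential (dx u) q r t * sin t) - radial u q r t).
Proof.
evar (l : R). replace (_ - radial u q r t) with l; unfold l.
- unfold tangential at 1.
  apply (is_derive_plus (fun t => - polar (dx u) q r t * sin t)
                        (fun t => polar (dy u) q r t * cos t)).
  + apply (is_derive_mult (fun t => - polar (dx u) q r t) sin);
      [| apply is_derive_sin | apply Rmult_comm].
    apply (is_derive_opp (polar (dx u) q r)), is_derive_polar_t, ux_C1.
  + apply (is_derive_mult (polar (dy u) q r) cos); [| apply is_derive_cos | apply Rmult_comm].
    apply is_derive_polar_t, uy_C1.
- unfold radial, tangential. ring_R.
Qed.

(* The Laplacian in polar coordinates: with [is_derive_radial_r] and [is_derive_tangential_t]
   this reads d/dr (r radial) + d/dt tangential = r (dx (dx u) + dy (dy u)) = 0. *)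
Lemma polar_laplace r t :
  radial (dx u) q r t * cos t + radial (dy u) q r t * sin t
  = tangential (dx u) q r t * sin t - tangential (dy u) q r t * cos t.
Proof.
assert (Hl := proj2 Hu (circle_pt q r t)).
assert (Hcs := sin2_cos2 t). unfold Rsqr in Hcs.
unfold radial, tangential, polar. nra.
Qed.

Lemma is_derive_circle_moment w r :
  (forall t, continuous w t) ->
  is_derive (circle_moment u q w) r (RInt (fun t => radial u q r t * w t) 0 (2 * PI)).
Proof.
intros Cw.
apply (is_derive_RInt_param_2d (fun r t => polar u q r t * w t) (fun r t => radial u q r t * w t));
  intros r' t; [| unfold radial; continuity_2d ..].
apply (is_derive_scal_l (fun r => polar u q r t) r' _ (w t)), is_derive_polar_r, u_C1.
Qed.

Lemma is_derive_circle_flux w r :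
  (forall t, continuous w t) ->
  is_derive (fun r => r * RInt (fun t => radial u q r t * w t) 0 (2 * PI)) r
    (RInt (fun t => (radial u q r t
                     + r * (radial (dx u) q r t * cos t + radial (dy u) q r t * sin t)) * w t)
       0 (2 * PI)).
Proof.
intros Cw.
apply (is_derive_ext (fun r => RInt (fun t => r * radial u q r t * w t) 0 (2 * PI))).
- intros r'. rewrite <- (RInt_scal (V := R_CompleteNormedModule)).
  + apply RInt_ext. intros t _. ring_R.
  + apply ex_RInt_of_continuous. intros t.
    apply continuous_of_continuity_2d_pt with (F := fun r t => radial u q r t * w t).
    unfold radial. continuity_2d.
- apply (is_derive_RInt_param_2d (fun r t => r * radial u q r t * w t)
    (fun r t => (radial u q r t
                 + r * (radial (dx u) q r t * cos t + radial (dy u) q r t * sin t)) * w t));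
    intros r' t; [| unfold radial; continuity_2d ..].
  apply (is_derive_scal_l (fun r => r * radial u q r t) r' _ (w t)).
  evar (l : R). replace (_ + _) with l; unfold l.
  + apply (is_derive_mult (fun r => r) (fun r => radial u q r t));
      [apply is_derive_id | apply is_derive_radial_r | apply Rmult_comm].
  + ring_R.
Qed.

Lemma flux_derivative_by_parts w w' w'' r :
  periodic_C2 w w' w'' ->
  RInt (fun t => (radial u q r t
                  + r * (radial (dx u) q r t * cos t + radial (dy u) q r t * sin t)) * w t)
    0 (2 * PI)
  = RInt (fun t => tangential u q r t * w' t) 0 (2 * PI).
Proof.
intros (Dw & Dw' & _ & Pw & _).
set (dtang := fun r t =>
  r * (tangential (dy u) q r t * cos t - tangential (dx u) q r t * sin t) - radial u q r t).
assert (Cdtang : forall t, continuous (dtang r) t).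
{ intros t. apply continuous_of_continuity_2d_pt. unfold dtang, radial, tangential. continuity_2d. }
assert (Cw : forall t, continuous w t) by eauto using continuous_of_is_derive.
assert (Cw' : forall t, continuous w' t) by eauto using continuous_of_is_derive.
rewrite (RInt_ext _ (fun t => - (dtang r t * w t)))
  by (intros t _; unfold dtang; rewrite polar_laplace; ring_R).
rewrite (RInt_opp (V := R_CompleteNormedModule))
  by (apply ex_RInt_of_continuous; intros t; apply (continuous_mult (dtang r) w); auto).
rewrite (RInt_by_parts (tangential u q r) (dtang r) w w'); auto.
- apply Ropp_involutive.
- apply is_derive_tangential_t.
- unfold tangential. now rewrite !polar_2PI, cos_2PI, sin_2PI, cos_0, sin_0, Pw.
Qed.

Lemma tangential_moment_by_parts w w' w'' r :
  periodic_C2 w w' w'' ->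
  r * RInt (fun t => tangential u q r t * w' t) 0 (2 * PI) = - circle_moment u q w'' r.
Proof.
intros (_ & Dw' & Cw'' & _ & Pw').
assert (Ctang : forall t, continuous (fun t => r * tangential u q r t) t).
{ intros t. apply continuous_of_continuity_2d_pt with (F := fun r t => r * tangential u q r t).
  unfold tangential. continuity_2d. }
assert (Cw' : forall t, continuous w' t) by eauto using continuous_of_is_derive.
rewrite <- (RInt_scal (V := R_CompleteNormedModule)).
- rewrite (RInt_ext _ (fun t => (r * tangential u q r t) * w' t)) by (intros; ring_R).
  apply (RInt_by_parts (polar u q r)); auto.
  + intros t. apply is_derive_polar_t, u_C1.
  + now rewrite polar_2PI, Pw'.
- apply ex_RInt_of_continuous. intros t.
  apply continuous_of_continuity_2d_pt with (F := fun r t => tangential u q r t * w' t).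
  unfold tangential. continuity_2d.
Qed.

End HarmonicPolar.

(** * Mean value property and gradient estimates *)

Lemma euler_ode_const (a a' : R -> R) :
  (forall r, is_derive a r (a' r)) -> (forall r, is_derive (fun r => r * a' r) r 0) ->
  forall r, 0 < r -> a r = a 0.
Proof.
intros Ha HG r Hr.
assert (Z : forall s, 0 < s -> a' s = 0).
{ intros s Hs. assert (E := const_of_is_derive_0 _ HG s 0). simpl in E.
  rewrite Rmult_0_l in E. apply Rmult_integral in E. destruct E; lra. }
destruct (MVT_gen a 0 r (fun _ => 0)) as [c [_ Hc]]; [| | lra].
- intros x Hx. rewrite Rmin_left, Rmax_right in Hx by lra. rewrite <- (Z x) by lra. apply Ha.
- intros x _. apply continuity_pt_filterlim. eapply continuous_of_is_derive, Ha.
Qed.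

Lemma is_derive_0_of_linear_right (a : R -> R) c l :
  (forall r, 0 < r -> a r = r * c) -> a 0 = 0 -> is_derive a 0 l -> l = c.
Proof.
intros Hlin H0 Ha. apply is_derive_Reals in Ha.
destruct (Req_dec l c) as [E | E]; [exact E | exfalso].
destruct (Ha (Rabs (l - c)) ltac:(apply Rabs_pos_lt; lra)) as [[d Hd] Hdelta]. simpl in Hdelta.
specialize (Hdelta (d / 2) ltac:(lra) ltac:(rewrite Rabs_right; lra)).
rewrite Rplus_0_l, Hlin, H0 in Hdelta by lra.
replace ((d / 2 * c - 0) / (d / 2) - l) with (- (l - c)) in Hdelta by (field; lra).
rewrite Rabs_Ropp in Hdelta. lra.
Qed.

Lemma euler_ode_linear (a a' G' : R -> R) :
  (forall r, is_derive a r (a' r)) -> (forall r, is_derive (fun r => r * a' r) r (G' r)) ->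
  (forall r, r * G' r = a r) -> forall r, 0 < r -> a r = r * a' 0.
Proof.
intros Ha HG HG'.
assert (A0 : a 0 = 0) by (rewrite <- HG'; ring).
(* [r (r a' - a)] is constant: its derivative is [r a' - a + r G' - r a' = 0]. *)
assert (Euler : forall r, 0 < r -> r * a' r = a r).
{ intros r Hr.
  assert (Dh : forall s, is_derive (fun s => s * (s * a' s - a s)) s 0).
  { intros s. evar (l : R). replace 0 with l; unfold l.
    - apply (is_derive_mult (fun s => s) (fun s => s * a' s - a s));
        [apply is_derive_id | apply (is_derive_minus (fun s => s * a' s)); auto | apply Rmult_comm].
    - R_ops. rewrite <- (HG' s). ring. }
  assert (E := const_of_is_derive_0 _ Dh r 0). simpl in E. rewrite Rmult_0_l in E.
  apply Rmult_integral in E. destruct E; lra. }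
assert (Lin : forall r, 0 < r -> a r = r * a 1).
{ intros r Hr.
  assert (Dk : forall s, 0 < s -> is_derive (fun s => a s / s) s 0).
  { intros s Hs. evar (l : R). replace 0 with l; unfold l.
    - apply (is_derive_mult a (fun s => / s)); [auto | | apply Rmult_comm].
      apply (is_derive_inv (fun s => s)); [apply is_derive_id | lra].
    - R_ops. rewrite <- (Euler s Hs). field. lra. }
  destruct (MVT_gen (fun s => a s / s) 1 r (fun _ => 0)) as [c [Hc Hk]].
  - intros x Hx. apply Dk. unfold Rmin, Rmax in Hx. destruct (Rle_dec 1 r); lra.
  - intros x Hx. apply continuity_pt_filterlim.
    apply (continuous_of_is_derive (fun s => a s / s) x 0), Dk.
    unfold Rmin, Rmax in Hx. destruct (Rle_dec 1 r); lra.
  - assert (E : a r / r = a 1) by (rewrite Rdiv_1_r in Hk; lra).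
    rewrite <- E. field. lra. }
intros r Hr. rewrite (is_derive_0_of_linear_right a (a 1) (a' 0) Lin A0 (Ha 0)). now apply Lin.
Qed.

Lemma periodic_C2_const : periodic_C2 (fun _ => 1) (fun _ => 0) (fun _ => 0).
Proof.
split; [|split; [|split; [|split]]]; try intros t; try reflexivity.
- apply (is_derive_const (K := R_AbsRing) (V := R_NormedModule)).
- apply (is_derive_const (K := R_AbsRing) (V := R_NormedModule)).
- apply continuous_const.
Qed.

Lemma periodic_C2_cos : periodic_C2 cos (fun t => - sin t) (fun t => - cos t).
Proof.
split; [|split; [|split; [|split]]]; try intros t.
- apply is_derive_cos.
- apply (is_derive_opp sin), is_derive_sin.
- apply (continuous_opp cos), continuous_cos.
- now rewrite cos_2PI, cos_0.
- now rewrite sin_2PI, sin_0.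
Qed.

Lemma periodic_C2_sin : periodic_C2 sin cos (fun t => - sin t).
Proof.
split; [|split; [|split; [|split]]]; try intros t.
- apply is_derive_sin.
- apply is_derive_cos.
- apply (continuous_opp sin), continuous_sin.
- now rewrite sin_2PI, sin_0.
- now rewrite cos_2PI, cos_0.
Qed.

Lemma continuous_polar_harmonic u q r t : harmonic u -> continuous (polar u q r) t.
Proof.
intros Hu. apply continuous_of_continuity_2d_pt, continuity_2d_polar, C1_continuous.
apply (harmonic_C1 u Hu).
Qed.

Lemma circle_mean_value u q r :
  harmonic u -> 0 < r -> RInt (polar u q r) 0 (2 * PI) = 2 * PI * u q.
Proof.
intros Hu Hr.
assert (Cone : forall t, continuous (fun _ : R => 1) t) by (intros; apply continuous_const).
transitivity (circle_moment u q (fun _ => 1) r); [apply RInt_ext; intros; ring_R |].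
rewrite (euler_ode_const _ (fun r => RInt (fun t => radial u q r t * 1) 0 (2 * PI))); auto.
- unfold circle_moment. rewrite (RInt_ext _ (fun _ => u q)) by (intros; rewrite polar_0; ring_R).
  rewrite RInt_const. ring_R.
- intros r'. now apply is_derive_circle_moment.
- intros r'.
  assert (D := is_derive_circle_flux u q Hu (fun _ => 1) r' Cone). cbv beta in D.
  rewrite (flux_derivative_by_parts u q Hu _ _ _ r' periodic_C2_const) in D.
  rewrite (RInt_ext _ (fun _ => 0)), RInt_const, Rmult_0_r in D by (intros; ring_R).
  exact D.
Qed.

Lemma circle_moment_eigen u q w w' r :
  harmonic u -> periodic_C2 w w' (fun t => - w t) -> 0 < r ->
  circle_moment u q w r = r * RInt (fun t => radial u q 0 t * w t) 0 (2 * PI).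
Proof.
intros Hu Hw Hr.
assert (Cw : forall t, continuous w t) by (intros; eapply continuous_of_is_derive, (proj1 Hw)).
apply (euler_ode_linear (circle_moment u q w)
         (fun r => RInt (fun t => radial u q r t * w t) 0 (2 * PI))
         (fun r => RInt (fun t => tangential u q r t * w' t) 0 (2 * PI)));
  [intros r'; now apply is_derive_circle_moment | | | exact Hr].
- intros r'. rewrite <- (flux_derivative_by_parts u q Hu _ _ _ r' Hw).
  now apply (is_derive_circle_flux u q Hu w).
- intros r'. rewrite (tangential_moment_by_parts u q Hu _ _ _ r' Hw). unfold circle_moment.
  rewrite <- (RInt_opp (V := R_CompleteNormedModule)).
  + apply RInt_ext. intros t _. ring_R.
  + apply ex_RInt_of_continuous. intros t.
    apply (continuous_mult (polar u q r') (fun t => - w t)).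
    * now apply continuous_polar_harmonic.
    * now apply (continuous_opp w).
Qed.

Lemma RInt_cos_0_2PI : RInt cos 0 (2 * PI) = 0.
Proof.
rewrite (RInt_of_is_derive sin); [| apply is_derive_sin | apply continuous_cos].
rewrite sin_2PI, sin_0. ring_R.
Qed.

Lemma RInt_sin_0_2PI : RInt sin 0 (2 * PI) = 0.
Proof.
rewrite (RInt_of_is_derive (fun t => - cos t)).
- rewrite cos_2PI, cos_0. ring_R.
- intros t. evar (l : R). replace (sin t) with l; unfold l.
  + apply (is_derive_opp cos), is_derive_cos.
  + ring_R.
- apply continuous_sin.
Qed.

Lemma RInt_trig_cos A B : RInt (fun t => (A * cos t + B * sin t) * cos t) 0 (2 * PI) = PI * A.
Proof.
rewrite (RInt_of_is_derive (fun t => A * ((t + sin t * cos t) / 2) + B * (sin t * sin t / 2))).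
- rewrite sin_2PI, cos_2PI, sin_0, cos_0. R_ops. field.
- intros t. auto_derive; auto. assert (S := sin2_cos2 t). unfold Rsqr in S.
  transitivity ((A * cos t + B * sin t) * cos t + A / 2 * (1 - (sin t * sin t + cos t * cos t)));
    [field | rewrite S; ring].
- intros t. eapply continuous_of_is_derive. auto_derive; auto.
Qed.

Lemma RInt_trig_sin A B : RInt (fun t => (A * cos t + B * sin t) * sin t) 0 (2 * PI) = PI * B.
Proof.
rewrite (RInt_of_is_derive (fun t => A * (sin t * sin t / 2) + B * ((t - sin t * cos t) / 2))).
- rewrite sin_2PI, cos_2PI, sin_0, cos_0. R_ops. field.
- intros t. auto_derive; auto. assert (S := sin2_cos2 t). unfold Rsqr in S.
  transitivity ((A * cos t + B * sin t) * sin t + B / 2 * (1 - (sin t * sin t + cos t * cos t)));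
    [field | rewrite S; ring].
- intros t. eapply continuous_of_is_derive. auto_derive; auto.
Qed.

Lemma radial_0 u q t : radial u q 0 t = dx u q * cos t + dy u q * sin t.
Proof. unfold radial. now rewrite !polar_0. Qed.

Lemma circle_moment_cos u q r :
  harmonic u -> 0 < r -> circle_moment u q cos r = r * (PI * dx u q).
Proof.
intros Hu Hr. rewrite (circle_moment_eigen u q cos _ r Hu periodic_C2_cos Hr).
rewrite <- (RInt_trig_cos (dx u q) (dy u q)).
f_equal. apply RInt_ext. intros t _. now rewrite radial_0.
Qed.

Lemma circle_moment_sin u q r :
  harmonic u -> 0 < r -> circle_moment u q sin r = r * (PI * dy u q).
Proof.
intros Hu Hr. rewrite (circle_moment_eigen u q sin _ r Hu periodic_C2_sin Hr).
rewrite <- (RInt_trig_sin (dx u q) (dy u q)).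
f_equal. apply RInt_ext. intros t _. now rewrite radial_0.
Qed.

Lemma abs_RInt_weighted_le (f w : R -> R) a b :
  a <= b -> (forall t, continuous f t) -> (forall t, continuous w t) ->
  (forall t, 0 <= f t) -> (forall t, Rabs (w t) <= 1) ->
  Rabs (RInt (fun t => f t * w t) a b) <= RInt f a b.
Proof.
intros Hab Cf Cw Pf Bw.
assert (Cfw : forall t, continuous (fun t => f t * w t) t)
  by (intros t; now apply (continuous_mult f w)).
eapply Rle_trans; [apply abs_RInt_le; auto using ex_RInt_of_continuous |].
apply RInt_le; auto using ex_RInt_of_continuous.
- apply ex_RInt_of_continuous. intros t.
  apply (continuous_comp (fun t => f t * w t) Rabs); auto using continuous_Rabs.
- intros t _. rewrite Rabs_mult, (Rabs_right (f t)) by (apply Rle_ge, Pf).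
  specialize (Bw t). specialize (Pf t). nra.
Qed.

Lemma abs_circle_moment_le u q r k w :
  harmonic u -> 0 < r -> (forall t, continuous w t) -> (forall t, Rabs (w t) <= 1) ->
  RInt w 0 (2 * PI) = 0 -> (forall t, k <= polar u q r t) ->
  Rabs (circle_moment u q w r) <= 2 * PI * (u q - k).
Proof.
intros Hu Hr Cw Bw Iw Hk.
assert (Cu : forall t, continuous (polar u q r) t) by (intros; now apply continuous_polar_harmonic).
set (v := fun t => polar u q r t - k).
assert (Cv : forall t, continuous v t)
  by (intros t; apply (continuous_minus (polar u q r) (fun _ => k)); auto using continuous_const).
assert (Iv : RInt v 0 (2 * PI) = RInt (polar u q r) 0 (2 * PI) - RInt (fun _ => k) 0 (2 * PI))
  by (apply (RInt_minus (V := R_CompleteNormedModule));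
      auto using ex_RInt_of_continuous, continuous_const).
rewrite circle_mean_value, RInt_const in Iv by assumption.
change (scal (2 * PI - 0) k) with ((2 * PI - 0) * k) in Iv.
assert (Ikw : RInt (fun t => k * w t) 0 (2 * PI) = k * RInt w 0 (2 * PI))
  by (apply (RInt_scal (V := R_CompleteNormedModule)); auto using ex_RInt_of_continuous).
assert (Isum : RInt (fun t => v t * w t + k * w t) 0 (2 * PI)
               = RInt (fun t => v t * w t) 0 (2 * PI) + RInt (fun t => k * w t) 0 (2 * PI)).
{ apply (RInt_plus (V := R_CompleteNormedModule)); apply ex_RInt_of_continuous; intros t.
  - now apply (continuous_mult v w).
  - apply (continuous_mult (fun _ => k) w); auto using continuous_const. }
unfold circle_moment.
rewrite (RInt_ext (fun t => polar u q r t * w t) (fun t => v t * w t + k * w t))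
  by (intros; unfold v; ring_R).
rewrite Isum, Ikw, Iw, Rmult_0_r, Rplus_0_r.
replace (2 * PI * (u q - k)) with (RInt v 0 (2 * PI)) by (rewrite Iv; ring_R).
apply abs_RInt_weighted_le; auto.
- assert (H := PI_RGT_0). lra.
- intros t. specialize (Hk t). unfold v. lra.
Qed.

Lemma gradient_bound u q r k :
  harmonic u -> 0 < r -> (forall t, k <= polar u q r t) ->
  Rabs (dx u q) <= 2 * (u q - k) / r /\ Rabs (dy u q) <= 2 * (u q - k) / r.
Proof.
intros Hu Hr Hk. assert (P := PI_RGT_0).
assert (Bc : forall t, Rabs (cos t) <= 1) by (intros t; apply Rabs_le; destruct (COS_bound t); lra).
assert (Bs : forall t, Rabs (sin t) <= 1) by (intros t; apply Rabs_le; destruct (SIN_bound t); lra).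
assert (X := abs_circle_moment_le u q r k cos Hu Hr continuous_cos Bc RInt_cos_0_2PI Hk).
assert (Y := abs_circle_moment_le u q r k sin Hu Hr continuous_sin Bs RInt_sin_0_2PI Hk).
rewrite circle_moment_cos in X by assumption. rewrite circle_moment_sin in Y by assumption.
rewrite !Rabs_mult, (Rabs_right r), (Rabs_right PI) in X, Y by lra.
split; apply (Rmult_le_reg_l (r * PI)); try nra;
  replace (r * PI * (2 * (u q - k) / r)) with (2 * PI * (u q - k)) by (field; lra); lra.
Qed.

(** * Liouville theorem and Harnack inequality *)

Lemma eq_0_of_abs_le_div (a b : R) : (forall r, 0 < r -> Rabs a <= b / r) -> a = 0.
Proof.
intros H. destruct (Req_dec a 0) as [E | E]; [exact E | exfalso].
assert (Pa : 0 < Rabs a) by now apply Rabs_pos_lt.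
assert (Pb := Rabs_pos b). assert (Lb := Rle_abs b).
set (r := 2 * (Rabs b + 1) / Rabs a).
assert (Pr : 0 < r) by (unfold r; apply Rdiv_lt_0_compat; lra).
specialize (H r Pr). unfold r in H.
replace (b / (2 * (Rabs b + 1) / Rabs a)) with (Rabs a * (b / (2 * (Rabs b + 1)))) in H
  by (field; lra).
assert (b / (2 * (Rabs b + 1)) < 1)
  by (apply Rmult_lt_reg_r with (2 * (Rabs b + 1)); [lra | field_simplify; lra]).
nra.
Qed.

Lemma const_of_gradient_0 u :
  C1 u -> (forall z, dx u z = 0) -> (forall z, dy u z = 0) -> forall z w, u z = u w.
Proof.
intros [Hx [Hy _]] Gx Gy [a b] [c d].
transitivity (u (c, b)).
- apply (const_of_is_derive_0 (fun s => u (s, b))). intros s.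
  rewrite <- (Gx (s, b)). apply Derive_correct, (Hx (s, b)).
- apply (const_of_is_derive_0 (fun s => u (c, s))). intros s.
  rewrite <- (Gy (c, s)). apply Derive_correct, (Hy (c, s)).
Qed.

Lemma harmonic_bounded_below_const u k :
  harmonic u -> (forall z, k <= u z) -> forall z w, u z = u w.
Proof.
intros Hu Hk. apply const_of_gradient_0; [apply (harmonic_C1 u Hu) | |];
  intros z; apply (eq_0_of_abs_le_div _ (2 * (u z - k))); intros r Hr;
  apply (gradient_bound u z r k Hu Hr (fun t => Hk _)).
Qed.

Lemma harmonic_unbounded_below u k :
  harmonic u -> (exists z w : C, u z <> u w) -> exists c, u c < k.
Proof.
intros Hu [z [w Hne]]. apply NNPP. intros Hnot. apply Hne.
apply (harmonic_bounded_below_const u k Hu). intros c.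
apply Rnot_lt_le. intros Hc. apply Hnot. now exists c.
Qed.

Lemma harmonic_unbounded_above u K :
  harmonic u -> (exists z w : C, u z <> u w) -> exists q, K < u q.
Proof.
intros Hu [z [w Hne]].
destruct (harmonic_unbounded_below (fun z => - u z) (- K)) as [q Hq].
- now apply harmonic_opp.
- exists z, w. intros E. apply Hne. lra.
- exists q. lra.
Qed.

Lemma Cmod_sub_sym (a b : C) : Cmod (a - b) = Cmod (b - a).
Proof.
replace (b - a)%C with (- (a - b))%C
  by (destruct a, b; unfold Cminus, Copp, Cplus; simpl; f_equal; ring).
now rewrite Cmod_opp.
Qed.

Lemma Cmod_sub_triangle (a b c : C) : Cmod (a - c) <= Cmod (a - b) + Cmod (b - c).
Proof.
replace (a - c)%C with ((a - b) + (b - c))%C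
  by (destruct a, b, c; unfold Cminus, Copp, Cplus; simpl; f_equal; ring).
apply Cmod_triangle.
Qed.

Lemma abs_coord_sub_le (a b : C) :
  Rabs (fst a - fst b) <= Cmod (a - b) /\ Rabs (snd a - snd b) <= Cmod (a - b).
Proof.
assert (H := Rmax_Cmod (a - b)%C). destruct a, b. simpl in H.
split; (eapply Rle_trans; [| apply H]); [apply Rmax_l | apply Rmax_r].
Qed.

Lemma Cmod_circle_pt q r t : 0 <= r -> Cmod (circle_pt q r t - q) = r.
Proof.
intros Hr.
replace (circle_pt q r t - q)%C with (RtoC r * (cos t, sin t))%C
  by (destruct q; unfold circle_pt, Cminus, Copp, Cplus, Cmult, RtoC; simpl; f_equal; ring).
rewrite Cmod_mult, Cmod_R, Rabs_right by lra.
unfold Cmod. simpl. rewrite !Rmult_1_r, Rplus_comm.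
assert (S := sin2_cos2 t). unfold Rsqr in S. rewrite S, sqrt_1. ring.
Qed.

Definition seg (p q : C) (s : R) : C :=
  (fst p + s * (fst q - fst p), snd p + s * (snd q - snd p)).

Lemma seg_0 p q : seg p q 0 = p.
Proof. destruct p. unfold seg. simpl. f_equal; ring. Qed.

Lemma seg_1 p q : seg p q 1 = q.
Proof. destruct p, q. unfold seg. simpl. f_equal; ring. Qed.

Lemma Cmod_seg_sub_l p q s : Cmod (seg p q s - p) = Rabs s * Cmod (q - p).
Proof.
replace (seg p q s - p)%C with (RtoC s * (q - p))%C
  by (destruct p, q; unfold seg, Cminus, Copp, Cplus, Cmult, RtoC; simpl; f_equal; ring).
now rewrite Cmod_mult, Cmod_R.
Qed.

Lemma Cmod_seg_sub_r p q s : Cmod (seg p q s - q) = Rabs (1 - s) * Cmod (q - p).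
Proof.
replace (seg p q s - q)%C with (RtoC (1 - s) * (p - q))%C
  by (destruct p, q; unfold seg, Cminus, Copp, Cplus, Cmult, RtoC; simpl; f_equal; ring).
now rewrite Cmod_mult, Cmod_R, Cmod_sub_sym.
Qed.

Lemma exists_step_toward (p c : C) s :
  0 <= s <= Cmod (c - p) -> exists p', Cmod (p' - p) = s /\ Cmod (p' - c) = Cmod (c - p) - s.
Proof.
intros Hs. set (L := Cmod (c - p)) in *.
destruct (Req_dec L 0) as [L0 | L0].
- exists p. replace s with 0 by lra. split.
  + unfold Cminus. now rewrite Cplus_opp_r, Cmod_0.
  + rewrite Cmod_sub_sym. fold L. ring.
- assert (LP : 0 < L) by (assert (0 <= L) by apply Cmod_ge_0; lra).
  exists (seg p c (s / L)). rewrite Cmod_seg_sub_l, Cmod_seg_sub_r. fold L.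
  assert (0 <= s / L <= 1)
    by (split; [apply Rdiv_le_0_compat; lra |
                apply Rmult_le_reg_r with L; [lra | field_simplify; lra]]).
  rewrite Rabs_right, (Rabs_right (1 - s / L)) by lra. split; field; lra.
Qed.

Lemma is_derive_seg f p q s :
  C1 f -> is_derive (fun s => f (seg p q s)) s
            (dx f (seg p q s) * (fst q - fst p) + dy f (seg p q s) * (snd q - snd p)).
Proof.
intros Hf. unfold seg.
apply (is_derive_comp_C1 f (fun s => fst p + s * (fst q - fst p))
                           (fun s => snd p + s * (snd q - snd p)));
  [exact Hf | auto_derive; auto; ring ..].
Qed.

Lemma gradient_bound_positive u p d z :
  harmonic u -> 0 < d -> (forall w, Cmod (w - p) < d -> 0 < u w) -> Cmod (z - p) <= d / 2 ->
  Rabs (dx u z) <= 8 * u z / d /\ Rabs (dy u z) <= 8 * u z / d.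
Proof.
intros Hu Hd Hpos Hz.
assert (Hc : forall t, 0 <= polar u z (d / 4) t).
{ intros t. apply Rlt_le, Hpos. eapply Rle_lt_trans; [apply (Cmod_sub_triangle _ z p) |].
  rewrite Cmod_circle_pt; lra. }
replace (8 * u z / d) with (2 * (u z - 0) / (d / 4)) by (field; lra).
apply gradient_bound; [exact Hu | lra | exact Hc].
Qed.

Lemma harnack_half_disc u p q d :
  harmonic u -> 0 < d -> (forall w, Cmod (w - p) < d -> 0 < u w) -> Cmod (q - p) <= d / 2 ->
  u p <= exp 8 * u q.
Proof.
intros Hu Hd Hpos Hq.
set (l1 := fst q - fst p). set (l2 := snd q - snd p).
assert (Bl : Rabs l1 <= d / 2 /\ Rabs l2 <= d / 2)
  by (unfold l1, l2; destruct (abs_coord_sub_le q p); split; lra).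
set (dpsi := fun s => (dx u (seg p q s) * l1 + dy u (seg p q s) * l2) * exp (8 * s)
                      + u (seg p q s) * (8 * exp (8 * s))).
assert (Dpsi : forall s, is_derive (fun s => u (seg p q s) * exp (8 * s)) s (dpsi s)).
{ intros s. apply (is_derive_mult (fun s => u (seg p q s)) (fun s => exp (8 * s)));
    [apply is_derive_seg, (harmonic_C1 u Hu) | auto_derive; auto; ring | apply Rmult_comm]. }
assert (Pos : forall s, 0 <= s <= 1 -> 0 <= dpsi s).
{ intros s Hs. set (z := seg p q s).
  assert (Hz : Cmod (z - p) <= d / 2).
  { unfold z. rewrite Cmod_seg_sub_l, Rabs_right by lra.
    assert (0 <= Cmod (q - p)) by apply Cmod_ge_0. nra. }
  destruct (gradient_bound_positive u p d z Hu Hd Hpos Hz) as [Gx Gy].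
  assert (Uz : 0 < u z) by (apply Hpos; lra).
  assert (Ex : Rabs (dx u z * l1) <= 4 * u z).
  { rewrite Rabs_mult. apply Rle_trans with (8 * u z / d * (d / 2)); [| apply Req_le; field; lra].
    apply Rmult_le_compat; auto using Rabs_pos; apply Bl. }
  assert (Ey : Rabs (dy u z * l2) <= 4 * u z).
  { rewrite Rabs_mult. apply Rle_trans with (8 * u z / d * (d / 2)); [| apply Req_le; field; lra].
    apply Rmult_le_compat; auto using Rabs_pos; apply Bl. }
  apply Rabs_le_between in Ex, Ey.
  assert (0 < exp (8 * s)) by apply exp_pos.
  unfold dpsi. fold z. nra. }
destruct (MVT_gen (fun s => u (seg p q s) * exp (8 * s)) 0 1 dpsi) as [c [Hc E]].
- intros x _. apply Dpsi.
- intros x _. apply continuity_pt_filterlim. exact (continuous_of_is_derive _ _ _ (Dpsi x)).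
- rewrite Rmin_left, Rmax_right in Hc by lra.
  assert (Pc := Pos c Hc).
  rewrite seg_0, seg_1, Rmult_0_r, exp_0, Rmult_1_r in E. lra.
Qed.

Lemma exists_root_on_segment u p q :
  C1 u -> u q <= 0 <= u p -> exists z, u z = 0 /\ Cmod (z - p) <= Cmod (q - p).
Proof.
intros Hu Hpq.
destruct (IVT_gen (fun s => u (seg p q s)) 0 1 0) as [c [Hc Ec]].
- intros s. apply continuity_pt_filterlim.
  exact (continuous_of_is_derive _ _ _ (is_derive_seg u p q s Hu)).
- rewrite seg_0, seg_1. unfold Rmin, Rmax. destruct (Rle_dec (u p) (u q)); lra.
- rewrite Rmin_left, Rmax_right in Hc by lra.
  exists (seg p q c). split; [exact Ec |].
  rewrite Cmod_seg_sub_l, Rabs_right by lra.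
  assert (0 <= Cmod (q - p)) by apply Cmod_ge_0. nra.
Qed.

(** * Suprema on discs *)

Lemma list_bounded {T} (f : T -> R) (l : list T) : exists B, forall t, List.In t l -> f t <= B.
Proof.
induction l as [| t l [B HB]]; [now exists 0 |].
exists (Rmax (f t) B). intros t' [<- | H]; [apply Rmax_l |].
eapply Rle_trans; [apply HB, H | apply Rmax_r].
Qed.

Lemma continuous_2d_bounded_rect (f : C -> R) a b a' b' :
  continuous_2d f -> exists B, forall x y, a <= x <= b -> a' <= y <= b' -> f (x, y) <= B.
Proof.
intros Hf.
set (pt := fun t : Compactness.Tn 2 R => (fst t, fst (snd t))).
assert (Hd : forall t, {d : posreal | forall x y,
                 Rabs (x - fst (pt t)) < d -> Rabs (y - snd (pt t)) < d ->
                 Rabs (f (x, y) - f (pt t)) < 1}).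
{ intros t. apply constructive_indefinite_description.
  destruct (Hf (fst (pt t)) (snd (pt t)) (mkposreal 1 Rlt_0_1)) as [d Hd].
  exists d. intros x y. rewrite (surjective_pairing (pt t)) at 3. apply Hd. }
apply NNPP. intros Hnot.
(* finitely many squares, on each of which f varies by less than 1, cover the rectangle *)
apply (compactness_list 2 (a, (a', tt)) (b, (b', tt)) (fun t => proj1_sig (Hd t))).
intros [l Hl]. apply Hnot.
destruct (list_bounded (fun t => f (pt t)) l) as [B HB].
exists (B + 1). intros x y Hx Hy.
destruct (Hl (x, (y, tt))) as [t [Ht [_ Hc]]]; [simpl; tauto |].
destruct (Hd t) as [d Hdt]. destruct t as [t1 [t2 []]]. simpl in Hc, Hdt.
destruct Hc as [H1 [H2 _]].
specialize (Hdt x y H1 H2). specialize (HB _ Ht). simpl in HB.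
apply Rabs_lt_between in Hdt. lra.
Qed.

Lemma continuous_2d_bounded_disc (f : C -> R) c R0 :
  continuous_2d f -> exists B, forall p, Cmod (p - c) <= R0 -> f p <= B.
Proof.
intros Hf.
destruct (continuous_2d_bounded_rect f (fst c - R0) (fst c + R0) (snd c - R0) (snd c + R0) Hf)
  as [B HB].
exists B. intros [x y] Hp. destruct (abs_coord_sub_le (x, y) c) as [A1 A2]. simpl in A1, A2.
apply Rabs_le_between in A1, A2. apply HB; lra.
Qed.

Lemma le_M (u : C -> R) z r w : Defs.disc z r w -> Rbar_le (u w) (M u z r).
Proof. intros Hw. apply (proj1 (Lub_Rbar_correct _)). now exists w. Qed.

Lemma M_le (u : C -> R) z r B : (forall w, Defs.disc z r w -> u w <= B) -> Rbar_le (M u z r) B.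
Proof. intros H. apply (proj2 (Lub_Rbar_correct _)). intros x [w [Hw ->]]. now apply H. Qed.

Lemma M_le_scale_M (u : C -> R) z r r' K p :
  0 < K -> (forall w, Defs.disc z r w -> u w <= K * u p) -> Defs.disc z r' p ->
  Rbar_le (M u z r) (Rbar_mult K (M u z r')).
Proof.
intros HK Hup Hp.
assert (M1 := M_le u z r _ Hup). assert (M2 := le_M u z r' p Hp).
destruct (M u z r') as [m | |]; [| | contradiction].
- eapply Rbar_le_trans; [exact M1 |]. simpl in *. now apply Rmult_le_compat_l; [lra |].
- simpl. destruct (Rle_dec 0 K) as [H0 | H0]; [| lra].
  destruct (Rle_lt_or_eq_dec 0 K H0); [| lra]. now destruct (M u z r).
Qed.

Lemma exists_half_maximizer {T} (P : T -> Prop) (G : T -> R) x0 :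
  (exists B, forall x, P x -> G x <= B) -> P x0 -> 0 < G x0 ->
  exists p, P p /\ forall x, P x -> G x < 2 * G p.
Proof.
intros [B HB] P0 G0.
destruct (completeness (fun y => exists x, P x /\ y = G x)) as [S [HS1 HS2]].
- exists B. intros y [x [Px ->]]. now apply HB.
- now exists (G x0), x0.
- assert (GS : forall x, P x -> G x <= S) by (intros x Px; apply HS1; now exists x).
  assert (S0 := GS x0 P0).
  apply NNPP. intros Hnot.
  enough (S <= S / 2) by lra.
  apply HS2. intros y [x [Px ->]]. apply Rnot_lt_le. intros Hx.
  apply Hnot. exists x. split; [exact Px |]. intros x' Px'. specialize (GS x' Px'). lra.
Qed.

(** * The doubling disc *)

Definition weighted (gam : nat) (u : C -> R) (c : C) (R0 : R) (q : C) : R :=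
  Rmax (u q) 0 * (R0 - Cmod (q - c)) ^ gam.

Section Doubling.

Variables (gam : nat) (u : C -> R) (c p : C) (R0 : R).
Hypothesis gam_pos : (0 < gam)%nat.
Hypothesis p_in : Cmod (p - c) <= R0.
Hypothesis weighted_p_pos : 0 < weighted gam u c R0 p.
Hypothesis half_max :
  forall q, Cmod (q - c) <= R0 -> weighted gam u c R0 q < 2 * weighted gam u c R0 p.

Let d := R0 - Cmod (p - c).

Lemma doubling_radius_pos : 0 < d.
Proof.
destruct (Req_dec d 0) as [E | E]; [| unfold d in *; lra].
unfold weighted in weighted_p_pos. fold d in weighted_p_pos.
rewrite E, pow_i in weighted_p_pos by lia. lra.
Qed.

Lemma doubling_center_pos : 0 < u p.
Proof.
assert (Pd := pow_lt d gam doubling_radius_pos).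
unfold weighted in weighted_p_pos. fold d in weighted_p_pos.
unfold Rmax in weighted_p_pos. destruct (Rle_dec (u p) 0); nra.
Qed.

Lemma weighted_center : weighted gam u c R0 p = u p * d ^ gam.
Proof. unfold weighted. rewrite Rmax_left; [reflexivity | apply Rlt_le, doubling_center_pos]. Qed.

Lemma doubling_bound q : d / 2 <= R0 - Cmod (q - c) -> u q < 2 * 2 ^ gam * u p.
Proof.
intros Hq. assert (Pd := doubling_radius_pos). assert (Up := doubling_center_pos).
assert (P2 : 0 < 2 ^ gam) by (apply pow_lt; lra).
destruct (Rle_dec (u q) 0) as [Hle | Hgt]; [nra |].
set (e := R0 - Cmod (q - c)) in *.
assert (Wq := half_max q ltac:(unfold e in Hq; lra)).
rewrite weighted_center in Wq. unfold weighted in Wq. rewrite Rmax_left in Wq by lra. fold e in Wq.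
assert (Pe : 0 < e ^ gam) by (apply pow_lt; lra).
assert (de : d ^ gam <= 2 ^ gam * e ^ gam) by (rewrite <- Rpow_mult_distr; apply pow_incr; lra).
apply (Rmult_lt_reg_r (e ^ gam)); [exact Pe |].
apply Rlt_le_trans with (1 := Wq). nra.
Qed.

Lemma doubling_nonpositive_near :
  harmonic u -> u c <= 0 -> 2 * exp 8 < (13 / 12) ^ gam ->
  exists w, Cmod (w - p) < d / 6 /\ u w <= 0.
Proof.
intros Hu Hc Hgain. assert (Pd := doubling_radius_pos). assert (Up := doubling_center_pos).
apply NNPP. intros Hnot.
assert (Hpos : forall w, Cmod (w - p) < d / 6 -> 0 < u w).
{ intros w Hw. apply Rnot_le_lt. intros Hle. apply Hnot. now exists w. }
assert (Lc : d / 6 <= Cmod (c - p)) by (apply Rnot_lt_le; intros Hl; specialize (Hpos c Hl); lra).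
destruct (exists_step_toward p c (d / 12) ltac:(lra)) as [p' [Hp'p Hp'c]].
assert (Harnack := harnack_half_disc u p p' (d / 6) Hu ltac:(lra) Hpos ltac:(lra)).
assert (E8 := exp_pos 8).
assert (Up' : 0 < u p').
{ apply Rnot_le_lt. intros Hle. assert (exp 8 * u p' <= 0) by (apply Rmult_le_0_l; lra). lra. }
assert (Lcp : Cmod (c - p) = Cmod (p - c)) by apply Cmod_sub_sym.
assert (Wp' := half_max p' ltac:(unfold d in *; lra)).
rewrite weighted_center in Wp'. unfold weighted in Wp'. rewrite Rmax_left in Wp' by lra.
replace (R0 - Cmod (p' - c)) with (13 / 12 * d) in Wp'
  by (rewrite Hp'c, Lcp; unfold d; field).
rewrite Rpow_mult_distr in Wp'.
assert (Pd' : 0 < d ^ gam) by (apply pow_lt; lra).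
assert (P13 : 0 < (13 / 12) ^ gam) by (apply pow_lt; lra).
assert (u p * (13 / 12) ^ gam < 2 * exp 8 * u p); [| nra].
apply (Rmult_lt_reg_r (d ^ gam)); [exact Pd' |].
apply Rle_lt_trans with (exp 8 * u p' * ((13 / 12) ^ gam * d ^ gam)); [| nra].
assert (0 <= (13 / 12) ^ gam * d ^ gam) by nra. nra.
Qed.

Lemma doubling_disc :
  harmonic u -> u c <= 0 -> 2 * exp 8 < (13 / 12) ^ gam ->
  exists z rho, 0 < rho /\ u z = 0 /\
    (forall q, Defs.disc z rho q -> u q <= 2 * 2 ^ gam * u p) /\ Defs.disc z (rho / 2) p.
Proof.
intros Hu Hc Hgain. assert (Pd := doubling_radius_pos). assert (Up := doubling_center_pos).
destruct (doubling_nonpositive_near Hu Hc Hgain) as [w [Hw Hwu]].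
destruct (exists_root_on_segment u p w (proj1 (harmonic_C1 u Hu)) ltac:(lra)) as [z [Hz Hzp]].
exists z, (d / 3). split; [lra |]. split; [exact Hz |]. unfold Defs.disc. split.
- intros q Hq. apply Rlt_le, doubling_bound.
  assert (Hqc := Cmod_sub_triangle q p c). assert (Hqp := Cmod_sub_triangle q z p).
  unfold d in *. lra.
- rewrite Cmod_sub_sym. lra.
Qed.

End Doubling.

Lemma exists_doubling_center gam u c R0 q0 :
  harmonic u -> Cmod (q0 - c) <= R0 -> 0 < weighted gam u c R0 q0 ->
  exists p, Cmod (p - c) <= R0 /\ 0 < weighted gam u c R0 p /\
    forall q, Cmod (q - c) <= R0 -> weighted gam u c R0 q < 2 * weighted gam u c R0 p.
Proof.
intros Hu Hq0 Wq0.
destruct (continuous_2d_bounded_disc u c R0 (C1_continuous u (proj1 (harmonic_C1 u Hu))))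
  as [B HB].
destruct (exists_half_maximizer (fun q => Cmod (q - c) <= R0) (weighted gam u c R0) q0)
  as [p [Hp Hmax]]; [| exact Hq0 | exact Wq0 |].
- exists (Rmax B 0 * R0 ^ gam). intros q Hq. assert (Cq := Cmod_ge_0 (q - c)).
  unfold weighted.
  apply Rmult_le_compat; [apply Rmax_r | apply pow_le; lra | | apply pow_incr; lra].
  apply Rle_max_compat_r, HB, Hq.
- exists p. split; [exact Hp | split; [specialize (Hmax q0 Hq0); lra | exact Hmax]].
Qed.

Lemma exists_balanced_disc gam u A :
  2 * exp 8 < (13 / 12) ^ gam -> harmonic u -> (exists z w : C, u z <> u w) -> 0 <= A ->
  exists z rho, 0 < rho /\ u z = 0 /\
    Rbar_le (M u z rho) (Rbar_mult (2 * 2 ^ gam) (M u z (rho / 2))) /\ Rbar_lt A (M u z rho).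
Proof.
intros Hgain Hu Hnc HA.
assert (Hgam : (0 < gam)%nat)
  by (destruct gam; [simpl in Hgain; assert (H := exp_ineq1 8 ltac:(lra)); lra | lia]).
assert (P2 : 0 < 2 ^ gam) by (apply pow_lt; lra).
destruct (harmonic_unbounded_below u 0 Hu Hnc) as [c Hc].
destruct (harmonic_unbounded_above u (2 * 2 ^ gam * A) Hu Hnc) as [q0 Hq0].
set (R0 := 2 * Cmod (q0 - c) + 1).
assert (Cq0 := Cmod_ge_0 (q0 - c)).
assert (Wq0 : 0 < weighted gam u c R0 q0).
{ unfold weighted. rewrite Rmax_left by nra.
  apply Rmult_lt_0_compat; [nra | apply pow_lt; unfold R0; lra]. }
destruct (exists_doubling_center gam u c R0 q0 Hu ltac:(unfold R0; lra) Wq0)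
  as [p [Hp [Wp Hmax]]].
destruct (doubling_disc gam u c p R0 Hgam Hp Wp Hmax Hu ltac:(lra) Hgain)
  as [z [rho [Hrho [Hz [Hup Hpz]]]]].
assert (Aup : A < u p).
{ assert (Cp := Cmod_ge_0 (p - c)).
  assert (u q0 < 2 * 2 ^ gam * u p)
    by (apply (doubling_bound gam u c p R0 Hgam Hp Wp Hmax); unfold R0 in *; lra).
  apply (Rmult_lt_reg_l (2 * 2 ^ gam)); lra. }
exists z, rho. split; [exact Hrho |]. split; [exact Hz |]. split.
- apply M_le_scale_M with p; [lra | exact Hup | exact Hpz].
- eapply Rbar_lt_le_trans; [| apply (le_M u z rho p)]; [exact Aup |].
  unfold Defs.disc in *. lra.
Qed.
Lemma exp_8_lt_pow_13_12 : 2 * exp 8 < (13 / 12) ^ 192.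
Proof.
assert (E8 : exp 8 <= 3 ^ 8).
{ replace (exp 8) with (exp 1 ^ 8)
    by (replace 8 with (1 + 1 + 1 + 1 + 1 + 1 + 1 + 1) by ring; rewrite !exp_plus; ring).
  apply pow_incr. split; [apply Rlt_le, exp_pos | apply exp_le_3]. }
assert (B12 : 2 <= (13 / 12) ^ 12).
{ replace (13 / 12) with (1 + 1 / 12) by field.
  eapply Rle_trans; [| apply Rle_pow_lin; lra]. simpl. lra. }
change 192%nat with (12 * 16)%nat. rewrite pow_mult.
assert (2 ^ 16 <= ((13 / 12) ^ 12) ^ 16) by (apply pow_incr; lra).
simpl in *. lra.
Qed.

Theorem corollary4 :
  exists Cst : R, 0 < Cst /\
  forall u : C -> R, harmonic u -> (exists z w : C, u z <> u w) ->
  exists (zs : nat -> C) (rho : nat -> R),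
    (forall n, 0 < rho n /\ u (zs n) = 0 /\
       Rbar_le (M u (zs n) (rho n)) (Rbar_mult (Finite Cst) (M u (zs n) (rho n / 2)))) /\
    (forall A : R, exists N : nat, forall n, (N <= n)%nat ->
       Rbar_lt (Finite A) (M u (zs n) (rho n))).
Proof.
exists (2 * 2 ^ 192). split; [assert (0 < 2 ^ 192) by (apply pow_lt; lra); lra |].
intros u Hu Hnc.
destruct (choice (fun (n : nat) (zr : C * R) =>
    0 < snd zr /\ u (fst zr) = 0 /\
    Rbar_le (M u (fst zr) (snd zr)) (Rbar_mult (2 * 2 ^ 192) (M u (fst zr) (snd zr / 2))) /\
    Rbar_lt (INR n) (M u (fst zr) (snd zr)))) as [f Hf].
{ intros n.
  destruct (exists_balanced_disc 192 u (INR n) exp_8_lt_pow_13_12 Hu Hnc (pos_INR n))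
    as [z [r H]].
  now exists (z, r). }
exists (fun n => fst (f n)), (fun n => snd (f n)). split.
- intros n. destruct (Hf n) as (H1 & H2 & H3 & _). auto.
- intros A. destruct (INR_unbounded A) as [N HN]. exists N. intros n Hn.
  destruct (Hf n) as (_ & _ & _ & H4). eapply Rbar_le_lt_trans; [| exact H4].
  apply le_INR in Hn. simpl. lra.
Qed.
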